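(* In any tree $T=(V,E)$, $$n_T(\mathcal{L}_5)=\frac12\sum_{st\in E}\big(g_2(s,t)+g_2(t,s)\big),\qquad g_2(s,t)=(k_t-1)(\xi(s)-k_t-k_s+1).$$
   Context: $k_x$ is the degree of $x$, $\xi(s)=\sum_{t\in\Gamma(s)}k_t$ the sum of the degrees of the neighbours of $s$. $\mathcal{L}_5$ is the path on 5 vertices and $n_T(\mathcal{L}_5)$ the number of subgraphs of $T$ isomorphic to it. *)

From HB Require Import structures.
From mathcomp Require Import all_boot all_order all_algebra.
Set Implicit Arguments. Unset Strict Implicit. Unset Printing Implicit Defensive.
Import GRing.Theory Num.Theory.

Definition simple_graph (V : finType) (e : rel V) : Prop :=
  symmetric e /\ irreflexive e.

Definition has_cycle (V : finType) (e : rel V) : Prop :=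
  exists (x : V) (p : seq V),
    [/\ 2 <= size p, uniq (x :: p), path e x p & e (last x p) x].

Definition is_tree (V : finType) (e : rel V) : Prop :=
  [/\ simple_graph e, (forall x y, connect e x y) & ~ has_cycle e].

Definition edges (V : finType) (e : rel V) : {set {set V}} :=
  [set [set x; y] | x in V, y in V & e x y].

Definition deg (V : finType) (e : rel V) (x : V) : nat := #|[set y | e x y]|.

Definition xi (V : finType) (e : rel V) (s : V) : nat :=
  \sum_(t | e s t) deg e t.

Definition g2 (V : finType) (e : rel V) (s t : V) : int :=
  ((deg e t)%:Z - 1) * ((xi e s)%:Z - (deg e t)%:Z - (deg e s)%:Z + 1).

(* A subgraph (W, F) of the graph (vertex set W, edge set F) is isomorphic to
   the path L_5 on 5 vertices iff there is an injective f : 'I_5 -> V with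
   W = f('I_5), and F = { {f i, f (i+1)} | i < 4 } contained in the edge set. *)
Definition is_L5_subgraph (V : finType) (e : rel V) (WF : {set V} * {set {set V}}) : bool :=
  (WF.2 \subset edges e) &&
  [exists f : {ffun 'I_5 -> V},
     [&& injectiveb f,
         WF.1 == [set f i | i : 'I_5] &
         WF.2 == [set [set f (inord i); f (inord i.+1)] | i : 'I_4]]].

Definition nL5 (V : finType) (e : rel V) : nat :=
  #|[set WF | is_L5_subgraph e WF]|.

From mathcomp Require Import all_boot all_order all_algebra zify.
Import GRing.Theory Num.Theory.
Set Implicit Arguments.
Unset Strict Implicit.
Unset Printing Implicit Defensive.

(* Every copy of L_5 is traced by exactly two injective walks a-b-c-d-x, one
   the reverse of the other, so 2 n_T(L_5) counts such walks. In a tree there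
   are no 3- or 4-cycles, so a-b-c-d-x is injective as soon as a <> c, b <> d
   and c <> x. Grouping the walks by the oriented middle edge (c, b), the
   choices of a and of (d, x) are independent and number
   (k_b - 1) * sum_{d ~ c, d <> b} (k_d - 1) = g_2(c, b); summing over both
   orientations of every edge gives the formula. *)

Lemma adjacent_index_rigid (j : nat -> nat) :
  (forall i, i < 5 -> j i < 5) ->
  {in [pred i | i < 5] &, injective j} ->
  (forall i, i < 4 -> j i.+1 = (j i).+1 \/ j i = (j i.+1).+1) ->
  (forall i, i < 5 -> j i = i) \/ (forall i, i < 5 -> j i = 4 - i).
Proof.
move=> j_lt j_inj j_adj.
have ne i1 i2 : i1 < 5 -> i2 < 5 -> i1 != i2 -> j i1 <> j i2.
  by move=> lt1 lt2 /eqP ne12 /j_inj; apply: contra_not ne12 => ->.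
have := ne 0 2 isT isT isT; have := ne 1 3 isT isT isT; have := ne 2 4 isT isT isT.
have := j_lt 0 isT; have := j_lt 1 isT; have := j_lt 2 isT; have := j_lt 3 isT.
have := j_lt 4 isT.
case: (j_adj 0 isT) (j_adj 1 isT) (j_adj 2 isT) (j_adj 3 isT) => [] ? [] ? [] ? [] ? *;
  first [ exfalso; lia
        | by left=> -[|[|[|[|[|i]]]]] //= _; lia
        | by right=> -[|[|[|[|[|i]]]]] //= _; lia ].
Qed.

Lemma uniq5_pairs_rigid (V : finType) x0 (s s' : seq V) :
  size s = 5 -> size s' = 5 -> uniq s -> uniq s' -> {subset s' <= s} ->
  (forall i, i < 4 -> exists2 k, k < 4 &
     [set nth x0 s' i; nth x0 s' i.+1] = [set nth x0 s k; nth x0 s k.+1]) ->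
  s' = s \/ s' = rev s.
Proof.
move=> size_s size_s' uniq_s uniq_s' sub_s's pairs.
pose j i := index (nth x0 s' i) s.
have j_lt i : i < 5 -> j i < 5.
  by move=> lt_i; rewrite -size_s index_mem sub_s's ?mem_nth ?size_s'.
have nth_j i : i < 5 -> nth x0 s (j i) = nth x0 s' i.
  by move=> lt_i; rewrite nth_index ?sub_s's ?mem_nth ?size_s'.
have nth_s_inj m1 m2 : m1 < 5 -> m2 < 5 -> nth x0 s m1 = nth x0 s m2 -> m1 = m2.
  by rewrite -size_s => lt1 lt2 /eqP; rewrite nth_uniq // => /eqP.
have j_inj : {in [pred i | i < 5] &, injective j}.
  move=> i1 i2; rewrite !inE => lt1 lt2 eq_j; apply/eqP.
  by rewrite -(nth_uniq x0 _ _ uniq_s') ?size_s' // -!nth_j // eq_j.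
have j_adj i : i < 4 -> j i.+1 = (j i).+1 \/ j i = (j i.+1).+1.
  move=> lt_i; have [k lt_k eq_pair] := pairs i lt_i.
  have in_pair m : m < 5 -> nth x0 s m \in [set nth x0 s k; nth x0 s k.+1] ->
      m = j i \/ m = j i.+1.
    move=> lt_m; rewrite -eq_pair !inE -!nth_j; try lia.
    by case/orP=> /eqP eq_nth; [left|right]; apply: (nth_s_inj _ _ _ _ eq_nth);
      rewrite ?j_lt //; lia.
  have lt_k5 : k < 5 by lia.
  by have := in_pair k lt_k5 (set21 _ _); have := in_pair k.+1 lt_k (set22 _ _); lia.
case: (adjacent_index_rigid j_lt j_inj j_adj) => [j_id|j_rev]; [left|right];
  apply: (eq_from_nth (x0 := x0)) => [|i]; rewrite ?size_rev size_s' ?size_s // => lt_i.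
  by rewrite -nth_j // j_id.
by rewrite nth_rev size_s // -nth_j // j_rev.
Qed.

Section AdjacentPairs.
Local Open Scope ring_scope.

Lemma sum_adjacent_pairs (V : finType) (e : rel V) (R : nmodType) (F : V -> V -> R) :
  symmetric e -> irreflexive e ->
  \sum_s \sum_(t | e s t && (enum_rank s < enum_rank t)%N) (F s t + F t s) =
  \sum_s \sum_(t | e s t) F s t.
Proof.
move=> e_sym e_irr.
have swap : \sum_s \sum_(t | e s t && (enum_rank s < enum_rank t)%N) F t s =
            \sum_s \sum_(t | e s t && (enum_rank t < enum_rank s)%N) F s t.
  rewrite (exchange_big_dep xpredT) //; apply: eq_bigr => s _.
  by apply: eq_bigl => t; rewrite e_sym.
under eq_bigr => s _ do rewrite big_split.
rewrite big_split /= swap -big_split; apply: eq_bigr => s _ /=.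
rewrite [RHS](bigID (fun t => enum_rank s < enum_rank t)%N) /=; congr (_ + _).
apply: eq_bigl => t; case e_st: (e s t) => //=.
have ne_ts : t != s by apply: contraTneq e_st => ->; rewrite e_irr.
by rewrite -leqNgt ltn_neqAle (inj_eq val_inj) (inj_eq enum_rank_inj) ne_ts.
Qed.

End AdjacentPairs.

Section L5Walks.
Variables (V : finType) (e : rel V).

Definition walk5 := (V * V * V * V * V)%type.

Definition walk_seq (w : walk5) : seq V :=
  let: (a, b, c, d, x) := w in [:: a; b; c; d; x].

Definition walk_ffun (w : walk5) : {ffun 'I_5 -> V} :=
  [ffun i : 'I_5 => nth w.2 (walk_seq w) i].

Definition ffun_walk (f : {ffun 'I_5 -> V}) : walk5 :=
  (f (inord 0), f (inord 1), f (inord 2), f (inord 3), f (inord 4)).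

Definition rev_walk (w : walk5) : walk5 :=
  let: (a, b, c, d, x) := w in (x, d, c, b, a).

Definition L5_walk (w : walk5) : bool :=
  let: (a, b, c, d, x) := w in
  [&& e a b, e b c, e c d, e d x & uniq [:: a; b; c; d; x]].

Definition L5_walks : {set walk5} := [set w | L5_walk w].

Definition traced_subgraph (f : {ffun 'I_5 -> V}) : {set V} * {set {set V}} :=
  ([set f i | i : 'I_5], [set [set f (inord i); f (inord i.+1)] | i : 'I_4]).

Definition walk_subgraph (w : walk5) := traced_subgraph (walk_ffun w).

Lemma size_walk_seq w : size (walk_seq w) = 5.
Proof. by case: w => [[[[a b] c] d] x]. Qed.

Lemma walk_seq_inj : injective walk_seq.
Proof. by case=> [[[[a b] c] d] x] [[[[? ?] ?] ?] ?] [-> -> -> -> ->]. Qed.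

Lemma walk_seq_rev w : walk_seq (rev_walk w) = rev (walk_seq w).
Proof. by case: w => [[[[a b] c] d] x]. Qed.

Lemma rev_walkK : involutive rev_walk.
Proof. by case=> [[[[a b] c] d] x]. Qed.

Lemma walk_ffunE x0 w (i : 'I_5) : walk_ffun w i = nth x0 (walk_seq w) i.
Proof. by rewrite ffunE (set_nth_default x0) // size_walk_seq. Qed.

Lemma walk_ffun_inord x0 w k :
  k < 5 -> walk_ffun w (inord k) = nth x0 (walk_seq w) k.
Proof. by move=> lt_k; rewrite (walk_ffunE x0) inordK. Qed.

Lemma ffun_walkK : cancel ffun_walk walk_ffun.
Proof.
move=> f; apply/ffunP => i; rewrite (walk_ffunE (f i)).
by case: i => [[|[|[|[|[|i]]]]] lt_i] //=; congr (f _); apply: val_inj; rewrite /= inordK.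
Qed.

Lemma L5_walk_uniq w : L5_walk w -> uniq (walk_seq w).
Proof. by case: w => [[[[a b] c] d] x] /and5P []. Qed.

Lemma mem_walk_vertices w v : (v \in (walk_subgraph w).1) = (v \in walk_seq w).
Proof.
apply/imsetP/idP => [[i _ ->]|/(nthP v) [i lt_i <-]].
  by rewrite (walk_ffunE v) mem_nth // size_walk_seq.
by rewrite size_walk_seq in lt_i; exists (Ordinal lt_i); rewrite // (walk_ffunE v).
Qed.

Lemma mem_walk_edges x0 w E : (E \in (walk_subgraph w).2) =
  [exists k : 'I_4, E == [set nth x0 (walk_seq w) k; nth x0 (walk_seq w) k.+1]].
Proof.
apply/imsetP/existsP => [[k _ ->]|[k /eqP ->]]; exists k => //;
  by have lt_k := ltn_ord k; rewrite !(walk_ffun_inord x0) //; lia.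
Qed.

Lemma walk_subgraph_rev w : walk_subgraph (rev_walk w) = walk_subgraph w.
Proof.
suff sub_edges w' : (walk_subgraph (rev_walk w')).2 \subset (walk_subgraph w').2.
  apply: injective_projections.
    by apply/setP => v; rewrite !mem_walk_vertices walk_seq_rev mem_rev.
  by apply/eqP; rewrite eqEsubset (sub_edges w) -{1}(rev_walkK w) (sub_edges (rev_walk w)).
case: w' => [[[[a b] c] d] x]; apply/subsetP => E.
rewrite !(mem_walk_edges a) => /existsP [[[|[|[|[|k]]]] lt_k]] //= /eqP ->;
  apply/existsP; [exists (Ordinal (isT : 3 < 4)) | exists (Ordinal (isT : 2 < 4))
                 | exists (Ordinal (isT : 1 < 4)) | exists (Ordinal (isT : 0 < 4))];
  by rewrite /= setUC.
Qed.

Lemma walk_subgraph_inj w w' : L5_walk w -> L5_walk w' ->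
  walk_subgraph w = walk_subgraph w' -> w' = w \/ w' = rev_walk w.
Proof.
move=> Lw Lw' eq_subgraph.
have := uniq5_pairs_rigid (x0 := w.2) (size_walk_seq w) (size_walk_seq w')
          (L5_walk_uniq Lw) (L5_walk_uniq Lw'); case.
- by move=> v; rewrite -!mem_walk_vertices eq_subgraph.
- move=> i lt_i.
  have : [set nth w.2 (walk_seq w') i; nth w.2 (walk_seq w') i.+1]
           \in (walk_subgraph w').2.
    by rewrite (mem_walk_edges w.2); apply/existsP; exists (Ordinal lt_i).
  by rewrite -eq_subgraph (mem_walk_edges w.2) => /existsP [k /eqP ->]; exists k.
- by move/walk_seq_inj; left.
- by rewrite -walk_seq_rev => /walk_seq_inj; right.
Qed.

Hypothesis e_sym : symmetric e.

Lemma mem_edges x y : ([set x; y] \in edges e) = e x y.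
Proof.
apply/idP/idP => [|e_xy]; last by apply: imset2_f; rewrite ?inE.
case/imset2P=> u v _; rewrite inE => e_uv eq_uv.
have /set2P[] : x \in [set u; v] by rewrite -eq_uv set21.
all: have /set2P[] : y \in [set u; v] by rewrite -eq_uv set22.
all: have /set2P[] : u \in [set x; y] by rewrite eq_uv set21.
all: have /set2P[] : v \in [set x; y] by rewrite eq_uv set22.
all: by move=> *; subst; rewrite // e_sym.
Qed.

Lemma L5_walk_rev w : L5_walk (rev_walk w) = L5_walk w.
Proof.
suff L5_rev w' : L5_walk w' -> L5_walk (rev_walk w').
  by apply/idP/idP => /L5_rev //; rewrite rev_walkK.
case: w' => [[[[a b] c] d] x] /and5P [e_ab e_bc e_cd e_dx uniq_w].
by apply/and5P; split; rewrite 1?e_sym // -rev_uniq.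
Qed.

Lemma L5_subgraph_walk w : L5_walk w -> is_L5_subgraph e (walk_subgraph w).
Proof.
move=> Lw; apply/andP; split.
  apply/subsetP => E; rewrite (mem_walk_edges w.2) => /existsP [k /eqP ->].
  case: w Lw => [[[[a b] c] d] x] /and5P [e_ab e_bc e_cd e_dx _].
  by case: k => [[|[|[|[|k]]]] lt_k] //=; rewrite mem_edges.
apply/existsP; exists (walk_ffun w); rewrite !eqxx !andbT.
apply/injectiveP => i j; rewrite !(walk_ffunE w.2) => /eqP.
by rewrite nth_uniq ?size_walk_seq ?L5_walk_uniq // => /eqP /val_inj.
Qed.

Lemma L5_subgraph_walkP WF :
  is_L5_subgraph e WF -> exists2 w, L5_walk w & WF = walk_subgraph w.
Proof.
case/andP=> sub_edges /existsP [f /and3P [/injectiveP inj_f /eqP eq_W /eqP eq_F]].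
have eq_WF : WF = traced_subgraph f by case: WF eq_W eq_F {sub_edges} => W F /= -> ->.
have e_f k : k < 4 -> e (f (inord k)) (f (inord k.+1)).
  move=> lt_k; rewrite -mem_edges; apply: (subsetP sub_edges).
  by rewrite eq_WF; apply/imsetP; exists (Ordinal lt_k).
exists (ffun_walk f); last by rewrite /walk_subgraph ffun_walkK.
apply/and5P; split; try exact: e_f.
rewrite -[X in uniq X]/(map f [:: inord 0; inord 1; inord 2; inord 3; inord 4]).
by rewrite (map_inj_uniq inj_f) /= !inE -!(inj_eq val_inj) /= !inordK.
Qed.

Lemma L5_subgraphsE : [set WF | is_L5_subgraph e WF] = walk_subgraph @: L5_walks.
Proof.
apply/setP => WF; rewrite inE; apply/idP/imsetP => [/L5_subgraph_walkP|].
  by case=> w Lw ->; exists w; rewrite ?inE.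
by case=> w; rewrite inE => Lw ->; apply: L5_subgraph_walk.
Qed.

(* Selects one of the two walks tracing each copy of L_5. *)
Definition rank_ordered (w : walk5) : bool :=
  let: (a, _, _, _, x) := w in enum_rank a < enum_rank x.

Lemma rank_ordered_rev w :
  L5_walk w -> rank_ordered (rev_walk w) = ~~ rank_ordered w.
Proof.
case: w => [[[[a b] c] d] x] /and5P [_ _ _ _].
rewrite /= !inE !negb_or => /and5P [/and4P [_ _ _ ne_ax] _ _ _ _].
by rewrite -leqNgt ltn_neqAle (inj_eq val_inj) (inj_eq enum_rank_inj) eq_sym ne_ax.
Qed.

Lemma card_L5_walks : #|L5_walks| = (nL5 e).*2.
Proof.
set R := [set w | rank_ordered w].
have rev_ordered : L5_walks :\: R = rev_walk @: (L5_walks :&: R).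
  apply/setP => w; rewrite (can_imset_pre _ rev_walkK) !inE L5_walk_rev.
  by case Lw: (L5_walk w); rewrite ?andbF //= rank_ordered_rev // andbT.
have subgraph_ordered : walk_subgraph @: L5_walks = walk_subgraph @: (L5_walks :&: R).
  apply/setP => WF; apply/imsetP/imsetP => [[w]|[w /setIP [Lw _] ->]]; last by exists w.
  rewrite inE => Lw ->; case Rw: (w \in R); first by exists w; rewrite // in_setI inE Lw.
  exists (rev_walk w); rewrite ?walk_subgraph_rev // in_setI !inE L5_walk_rev.
  by rewrite inE in Rw; rewrite rank_ordered_rev // Lw Rw.
rewrite -(cardsID R) rev_ordered card_imset; last exact: (can_inj rev_walkK).
rewrite addnn /nL5 L5_subgraphsE subgraph_ordered card_in_imset //.
move=> w w'; rewrite !inE => /andP [Lw Rw] /andP [Lw' Rw'].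
case/(walk_subgraph_inj Lw Lw') => // eq_w'.
by move: Rw'; rewrite eq_w' rank_ordered_rev // Rw.
Qed.

End L5Walks.

Section TreeCount.
Variables (V : finType) (e : rel V).
Hypotheses (e_sym : symmetric e) (e_irr : irreflexive e) (acyclic : ~ has_cycle e).

Lemma no_triangle a b c : e a b -> e b c -> e c a -> ~~ uniq [:: a; b; c].
Proof.
move=> e_ab e_bc e_ca; apply/negP => uniq_abc; apply: acyclic.
by exists a, [:: b; c]; split=> //=; rewrite e_ab e_bc.
Qed.

Lemma no_square a b c d :
  e a b -> e b c -> e c d -> e d a -> ~~ uniq [:: a; b; c; d].
Proof.
move=> e_ab e_bc e_cd e_da; apply/negP => uniq_abcd; apply: acyclic.
by exists a, [:: b; c; d]; split=> //=; rewrite e_ab e_bc e_cd.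
Qed.

Lemma L5_walkE a b c d x : L5_walk e (a, b, c, d, x) =
  [&& e b a, a != c, e c b, e c d, b != d, e d x & x != c].
Proof.
rewrite /= (e_sym b a) (e_sym c b).
apply/and5P/and5P => [[e_ab e_bc e_cd e_dx]|].
  rewrite /= !inE !negb_or.
  case/and5P=> [/and4P [_ ne_ac _ _] /and3P [_ ne_bd _] /andP [_ ne_cx] _ _].
  by rewrite e_ab ne_ac e_bc e_cd ne_bd e_dx eq_sym ne_cx.
case=> e_ab ne_ac e_bc e_cd /and3P [ne_bd e_dx ne_xc]; split=> //.
have ne_edge u v : e u v -> u != v by apply: contraTneq => ->; rewrite e_irr.
have ne_ab := ne_edge _ _ e_ab; have ne_bc := ne_edge _ _ e_bc.
have ne_cd := ne_edge _ _ e_cd; have ne_dx := ne_edge _ _ e_dx.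
have ne_ad : a != d.
  apply/eqP => eq_ad; subst d; move: (no_triangle e_ab e_bc e_cd).
  by rewrite /= !inE !negb_or ne_ab ne_ac ne_bc.
have ne_bx : b != x.
  apply/eqP => eq_bx; subst x; move: (no_triangle e_bc e_cd e_dx).
  by rewrite /= !inE !negb_or ne_bc ne_bd ne_cd.
have ne_ax : a != x.
  apply/eqP => eq_ax; subst x; move: (no_square e_ab e_bc e_cd e_dx).
  by rewrite /= !inE !negb_or ne_ab ne_ac ne_ad ne_bc ne_bd ne_cd.
rewrite /= !inE !negb_or ne_ab ne_ac ne_ad ne_ax ne_bc ne_bd ne_bx ne_cd ne_dx.
by rewrite eq_sym ne_xc.
Qed.

Lemma sum_walk5 (F : walk5 V -> nat) :
  \sum_w F w = \sum_a \sum_b \sum_c \sum_d \sum_x F (a, b, c, d, x).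
Proof.
rewrite [RHS]pair_bigA [RHS]pair_bigA [RHS]pair_bigA [RHS]pair_bigA.
by apply: eq_bigr => -[[[[]]]].
Qed.

Definition deg_but (t s : V) : nat := \sum_a (e t a && (a != s)).

Lemma deg_butE t s : e t s -> deg e t = (deg_but t s).+1.
Proof.
move=> e_ts; rewrite /deg cardsE -sum1_card (bigD1 s) //= add1n; congr _.+1.
by rewrite big_mkcond; apply: eq_bigr => a _; rewrite unfold_in; case: (_ && _).
Qed.

Lemma card_L5_walks_centre : #|L5_walks e| =
  \sum_c \sum_b \sum_d (e c b && e c d && (b != d)) * (deg_but b c * deg_but d c).
Proof.
have L5_walk_split a b c d x : L5_walk e (a, b, c, d, x) =
    (e c b && e c d && (b != d)) * ((e b a && (a != c)) * (e d x && (x != c))) :> nat.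
  rewrite L5_walkE !mulnb.
  by case: (e b a) (a != c) (e c b) (e c d) (b != d) (e d x) (x != c) => [] [] [] [] [] [] [].
rewrite /L5_walks -sum1dep_card big_mkcond sum_walk5 /=.
transitivity (\sum_b \sum_c \sum_d \sum_a \sum_x (L5_walk e (a, b, c, d, x) : nat)).
  rewrite exchange_big; apply: eq_bigr => b _.
  by rewrite exchange_big; apply: eq_bigr => c _; rewrite exchange_big.
rewrite exchange_big; apply: eq_bigr => c _; apply: eq_bigr => b _; apply: eq_bigr => d _.
under eq_bigr => a _ do under eq_bigr => x _ do rewrite L5_walk_split.
under eq_bigr => a _ do rewrite -big_distrr.
by rewrite -big_distrr -big_distrlr.
Qed.

Lemma card_L5_walks_edges : #|L5_walks e| =
  \sum_s \sum_(t | e s t) deg_but t s * \sum_(d | e s d && (d != t)) deg_but d s.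
Proof.
rewrite card_L5_walks_centre; apply: eq_bigr => s _.
rewrite [RHS]big_mkcond; apply: eq_bigr => t _ /=.
have [e_st|not_e_st] := boolP (e s t); last first.
  by rewrite big1 // => d _; rewrite (negbTE not_e_st).
rewrite big_distrr [RHS]big_mkcond; apply: eq_bigr => d _ /=.
by rewrite (eq_sym t d); case: (_ && _); rewrite ?mul1n.
Qed.

Lemma xi_deg_but s t : e s t ->
  ((xi e s)%:Z - (deg e t)%:Z - (deg e s)%:Z + 1 =
   (\sum_(d | e s d && (d != t)) deg_but d s)%:Z)%R.
Proof.
move=> e_st.
have xi_split : xi e s = deg e t + \sum_(d | e s d && (d != t)) deg e d.
  by rewrite /xi (bigD1 t).
have deg_split : \sum_(d | e s d && (d != t)) deg e d =
    \sum_(d | e s d && (d != t)) deg_but d s + \sum_(d | e s d && (d != t)) 1.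
  rewrite -big_split; apply: eq_bigr => d /andP [e_sd _].
  by rewrite /= addn1; apply: deg_butE; rewrite e_sym.
have deg_s : deg e s = (\sum_(d | e s d && (d != t)) 1).+1.
  by rewrite /deg -sum1dep_card (bigD1 t) //= add1n.
rewrite xi_split deg_split deg_s; lia.
Qed.

Lemma card_L5_walks_g2 :
  (#|L5_walks e|%:Z = \sum_s \sum_(t | e s t) g2 e s t)%R.
Proof.
rewrite card_L5_walks_edges -natz natr_sum; apply: eq_bigr => s _.
rewrite natr_sum; apply: eq_bigr => t e_st.
have e_ts : e t s by rewrite e_sym.
rewrite natrM !natz /g2 xi_deg_but // (deg_butE e_ts).
by rewrite -addn1 PoszD addrK.
Qed.

End TreeCount.

Local Open Scope ring_scope.

Theorem proposition18 (V : finType) (e : rel V) :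
  is_tree e ->
  (nL5 e)%:R =
    (1 / 2 : rat) *
      (\sum_(s : V) \sum_(t : V | e s t && (enum_rank s < enum_rank t)%N)
          ((g2 e s t + g2 e t s)%:~R : rat)).
Proof.
move=> [[e_sym e_irr] _ acyclic].
under eq_bigr => s _ do rewrite -rmorph_sum.
rewrite -rmorph_sum sum_adjacent_pairs // -card_L5_walks_g2 // card_L5_walks //.
by rewrite -mul2n PoszM rmorphM -!natz !rmorph_nat mulrA div1r mulVf ?mul1r.
Qed.
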